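(* Let $H$ be a real Hilbert space and $A:H\to2^H$ a maximally monotone operator with $zer(A)\neq\emptyset$. Let $\varphi:[0,\infty)\to[0,\infty)$ be an increasing function vanishing only at $0$, and $(\gamma_n)$ a sequence in $(0,\infty)$ with $\sum_{n=0}^\infty\gamma_n^2=\infty$ having rate of divergence $\theta$. Let $b\in\mathbb{N}$, $p\in zer(A)$ and $C$ the closed ball of center $p$ and radius $b$. Suppose $A$ is uniformly monotone on $C$ with modulus $\varphi$. For $x\in C$ let $x_0:=x$ and $x_{n+1}:=J_{\gamma_nA}x_n$. Then $p$ is the unique zero of $A$ in $C$ and $(x_n)$ converges strongly to $p$ with rate of convergence $$\Psi_{b,\theta,\varphi}(k):=\theta\left(b^2\left(\left\lceil\frac{2b}{\varphi\left(\frac1{k+1}\right)}\right\rceil+1\right)^2\right)+1.$$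
   Context: $zer(A)=\{x:0\in A(x)\}$; $J_{\gamma A}:=(id_H+\gamma A)^{-1}$. $A$ is uniformly monotone on $C$ with modulus $\varphi$ if for all $x,y\in C$, $u\in A(x)$, $v\in A(y)$: $\langle x-y,u-v\rangle\ge\varphi(\|x-y\|)$. A rate of divergence for $\sum\gamma_n^2=\infty$ is $\theta:\mathbb{N}\to\mathbb{N}$ with $\sum_{n=0}^{\theta(K)}\gamma_n^2\ge K$ for all $K$. A rate of convergence of $a_n\to a$ is $\Phi$ with $\|a_n-a\|\le\frac1{k+1}$ for all $k$ and $n\ge\Phi(k)$. *)

From mathcomp Require Import all_boot all_order all_algebra.
From mathcomp Require Import all_classical all_reals all_analysis.
Import Order.TTheory GRing.Theory Num.Theory.
Import numFieldNormedType.Exports.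
Local Open Scope classical_set_scope.
Local Open Scope ring_scope.

Set Implicit Arguments.
Unset Strict Implicit.
Unset Printing Implicit Defensive.

Section Defs.
Variables (R : realType) (V : lmodType R).

Definition inner_product (ip : V -> V -> R) : Prop :=
  [/\ (forall x y, ip x y = ip y x),
      (forall (a : R) (x y z : V), ip (a *: x + y) z = a * ip x z + ip y z),
      (forall x, 0 <= ip x x) &
      (forall x, ip x x = 0 -> x = 0)].

Definition monotone_op (ip : V -> V -> R) (A : V -> set V) : Prop :=
  forall x y u v, A x u -> A y v -> 0 <= ip (x - y) (u - v).

Definition maximally_monotone (ip : V -> V -> R) (A : V -> set V) : Prop :=
  monotone_op ip A /\
  forall B : V -> set V, monotone_op ip B ->
    (forall x u, A x u -> B x u) -> forall x u, B x u -> A x u.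

Definition zer (A : V -> set V) : set V := [set x | A x 0].

(* y \in J_{gamma A} x  <->  x \in (id + gamma A) y *)
Definition resolvent (A : V -> set V) (gamma : R) (x y : V) : Prop :=
  exists u, A y u /\ x = y + gamma *: u.

End Defs.

Section Defs2.
Variables (R : realType) (V : normedModType R).

Definition uniformly_monotone_on (ip : V -> V -> R) (A : V -> set V)
    (C : set V) (phi : R -> R) : Prop :=
  forall x y u v, C x -> C y -> A x u -> A y v ->
    phi `|x - y| <= ip (x - y) (u - v).

Definition rate_of_convergence (a : nat -> V) (l : V) (Phi : nat -> nat) : Prop :=
  forall k n, (Phi k <= n)%N -> `|a n - l| <= k.+1%:R^-1.

End Defs2.

Definition rate_of_divergence (R : realType) (gamma : nat -> R)
    (theta : nat -> nat) : Prop :=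
  forall K : nat, K%:R <= \sum_(0 <= n < (theta K).+1) gamma n ^+ 2.

(* Psi_{b,theta,phi}(k) = theta(b^2 (ceil(2b / phi(1/(k+1))) + 1)^2) + 1 ;
   the ceiling is nonnegative under the hypotheses, so absz is harmless *)
Definition Psi (R : realType) (b : nat) (theta : nat -> nat) (phi : R -> R)
    (k : nat) : nat :=
  (theta (b ^ 2 * (`|Num.ceil (2 * b%:R / phi k.+1%:R^-1 : R)|%N + 1) ^ 2)%N).+1.

(* Write e_n := x_n - p.  A resolvent step reads e_n = e_(n+1) + gamma_n u with
   u in A(x_(n+1)); expanding the square and using monotonicity against 0 in A(p)
   gives |e_n|^2 - |e_(n+1)|^2 >= gamma_n^2 |u|^2, so |e_n| is nonincreasing and the
   iterates stay in the ball C.  As long as |e_(n+1)| >= r, uniform monotonicity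
   and Cauchy-Schwarz give phi(r) <= <e_(n+1), u> <= b |u|, so every step lowers
   |e_n|^2 by at least gamma_n^2 phi(r)^2 / b^2.  Telescoping, the partial sums of
   gamma_n^2 stay below b^4 / phi(r)^2 while |e_n| >= r, and the rate of divergence
   theta bounds the index at which that threshold is passed. *)

From mathcomp Require Import all_boot all_order all_algebra.
From mathcomp Require Import all_classical all_reals all_analysis.
From mathcomp Require Import ring lra.
Import Order.TTheory GRing.Theory Num.Theory.
Import numFieldNormedType.Exports.
Local Open Scope classical_set_scope.
Local Open Scope ring_scope.

Set Implicit Arguments.
Unset Strict Implicit.
Unset Printing Implicit Defensive.

Lemma sqr_le_of_quadratic_ge0 (R : realFieldType) (a b c : R) :
  0 <= a -> 0 <= c -> (forall t, 0 <= a + 2 * t * b + t ^+ 2 * c) ->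
  b ^+ 2 <= a * c.
Proof.
move=> a_ge0 c_ge0 q_ge0.
have [->|b_neq0] := eqVneq b 0; first by rewrite expr0n mulr_ge0.
have [c0|c_neq0] := eqVneq c 0.
  have := q_ge0 (- (a + 1) / (2 * b)).
  have -> : 2 * (- (a + 1) / (2 * b)) * b = - (a + 1) by field; lra.
  by rewrite c0 mulr0; lra.
have c_gt0 : 0 < c by rewrite lt_def c_neq0.
have := q_ge0 (- b / c).
have -> : a + 2 * (- b / c) * b + (- b / c) ^+ 2 * c = a - b ^+ 2 / c.
  by field.
by rewrite subr_ge0 ler_pdivrMr.
Qed.

Section InnerProduct.
Variables (R : realType) (V : lmodType R) (ip : V -> V -> R).
Hypothesis ip_inner : inner_product ip.

Lemma ipC x y : ip x y = ip y x.
Proof. by case: ip_inner. Qed.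

Lemma ipDl x y z : ip (x + y) z = ip x z + ip y z.
Proof.
by case: ip_inner => _ ipDZ _ _; have := ipDZ 1 x y z; rewrite scale1r mul1r.
Qed.

Lemma ip0l z : ip 0 z = 0.
Proof. by have := ipDl 0 0 z; rewrite addr0 => h; lra. Qed.

Lemma ipZl a x z : ip (a *: x) z = a * ip x z.
Proof. by case: ip_inner => _ ipDZ _ _; rewrite -[a *: x]addr0 ipDZ ip0l addr0. Qed.

Lemma ipDr x y z : ip z (x + y) = ip z x + ip z y.
Proof. by rewrite ipC ipDl !(ipC z). Qed.

Lemma ipZr a x z : ip z (a *: x) = a * ip z x.
Proof. by rewrite ipC ipZl ipC. Qed.

Lemma ip0r z : ip z 0 = 0.
Proof. by rewrite ipC ip0l. Qed.

Lemma ip_ge0 x : 0 <= ip x x.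
Proof. by case: ip_inner. Qed.

Lemma ip_addZ x t u :
  ip (x + t *: u) (x + t *: u) = ip x x + 2 * t * ip x u + t ^+ 2 * ip u u.
Proof. by rewrite !ipDl !ipDr !ipZl !ipZr (ipC u x); ring. Qed.

Lemma ip_CauchySchwarz x y : ip x y ^+ 2 <= ip x x * ip y y.
Proof.
apply: sqr_le_of_quadratic_ge0; rewrite ?ip_ge0 // => t.
by rewrite -ip_addZ ip_ge0.
Qed.

End InnerProduct.

Section InnerProductNorm.
Variables (R : realType) (V : normedModType R) (ip : V -> V -> R).
Hypothesis ip_inner : inner_product ip.
Hypothesis normE : forall x : V, `|x| = Num.sqrt (ip x x).

Lemma sqr_normE x : `|x| ^+ 2 = ip x x.
Proof. by rewrite normE sqr_sqrtr // ip_ge0. Qed.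

Lemma ip_le_normM x y : ip x y <= `|x| * `|y|.
Proof.
apply: le_trans (ler_norm _) _.
rewrite -sqrtr_sqr -[_ * _]ger0_norm ?mulr_ge0 // -sqrtr_sqr exprMn !sqr_normE.
by rewrite ler_sqrt ?mulr_ge0 ?ip_ge0 // ip_CauchySchwarz.
Qed.

End InnerProductNorm.

Section ProximalPoint.
Variables (R : realType) (H : normedModType R) (ip : H -> H -> R).
Hypothesis ip_inner : inner_product ip.
Hypothesis normE : forall x : H, `|x| = Num.sqrt (ip x x).
Variables (A : H -> set H) (gamma : nat -> R) (p : H) (xs : nat -> H).
Hypothesis A_mono : monotone_op ip A.
Hypothesis gamma_gt0 : forall n, 0 < gamma n.
Hypothesis p_zer : zer A p.
Hypothesis xs_resolvent : forall n, resolvent A (gamma n) (xs n) (xs n.+1).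

Lemma proximal_sqr_decrease n :
  exists2 u, A (xs n.+1) u &
    gamma n ^+ 2 * `|u| ^+ 2 <= `|xs n - p| ^+ 2 - `|xs n.+1 - p| ^+ 2.
Proof.
have [u [Au ->]] := xs_resolvent n; exists u => //.
rewrite addrAC !(sqr_normE ip_inner normE) ip_addZ //.
have : 0 <= 2 * gamma n * ip (xs n.+1 - p) u.
  rewrite !mulr_ge0 ?(ltW (gamma_gt0 n)) //.
  by have := A_mono Au p_zer; rewrite subr0.
lra.
Qed.

Lemma proximal_fejer m n : (m <= n)%N -> `|xs n - p| <= `|xs m - p|.
Proof.
apply: (Order.NatMonotonyTheory.nonincnP (f := fun n => `|xs n - p|)) => {}n.
have [u _ decr] := proximal_sqr_decrease n.
rewrite -ler_sqr ?nnegrE // -subr_ge0; apply: le_trans decr.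
by rewrite mulr_ge0 ?sqr_ge0.
Qed.

Section Ball.
Variables (phi : R -> R) (rho : R).
Hypothesis phi_ge0 : forall t, 0 <= t -> 0 <= phi t.
Hypothesis phi_incr : forall s t, 0 <= s -> s <= t -> phi s <= phi t.
Hypothesis A_unif : uniformly_monotone_on ip A [set y | `|y - p| <= rho] phi.
Hypothesis x0_in_ball : `|xs 0 - p| <= rho.

Lemma proximal_in_ball n : `|xs n - p| <= rho.
Proof. exact: le_trans (proximal_fejer (leq0n n)) x0_in_ball. Qed.

Lemma proximal_gap_step r n : 0 <= r -> r <= `|xs n.+1 - p| ->
  gamma n ^+ 2 * phi r ^+ 2 <= rho ^+ 2 * (`|xs n - p| ^+ 2 - `|xs n.+1 - p| ^+ 2).
Proof.
move=> r_ge0 r_le; have [u Au decr] := proximal_sqr_decrease n.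
have phi_le : phi r <= rho * `|u|.
  have p_in_ball : `|p - p| <= rho by rewrite subrr normr0 (le_trans _ x0_in_ball).
  have := A_unif (proximal_in_ball n.+1) p_in_ball Au p_zer; rewrite subr0 => unif.
  apply: le_trans (phi_incr r_ge0 r_le) (le_trans unif _).
  apply: le_trans (ip_le_normM ip_inner normE _ _) _.
  by rewrite ler_wpM2r // proximal_in_ball.
have phi_sqr_le : phi r ^+ 2 <= rho ^+ 2 * `|u| ^+ 2.
  rewrite -exprMn ler_sqr ?nnegrE ?phi_ge0 //.
  exact: le_trans (phi_ge0 r_ge0) phi_le.
apply: le_trans (ler_wpM2l (sqr_ge0 (gamma n)) phi_sqr_le) _.
by rewrite mulrCA ler_wpM2l ?sqr_ge0.
Qed.

Lemma proximal_sum_bound r M : 0 <= r -> r <= `|xs M - p| ->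
  (\sum_(0 <= n < M) gamma n ^+ 2) * phi r ^+ 2 <= rho ^+ 4.
Proof.
move=> r_ge0 r_le; rewrite mulr_suml.
apply: le_trans
  (_ : _ <= \sum_(0 <= n < M) rho ^+ 2 * (`|xs n - p| ^+ 2 - `|xs n.+1 - p| ^+ 2)) _.
  apply: ler_sum_nat => n /andP[_ lt_nM]; apply: proximal_gap_step => //.
  exact: le_trans r_le (proximal_fejer lt_nM).
rewrite -mulr_sumr.
under eq_bigr do rewrite -opprB.
rewrite sumrN telescope_sumr // opprB (_ : 4 = 2 + 2)%N // exprD ler_wpM2l ?sqr_ge0 //.
apply: le_trans (_ : _ <= `|xs 0 - p| ^+ 2) _; first by rewrite gerBl sqr_ge0.
by rewrite ler_sqr ?nnegrE // (le_trans _ x0_in_ball).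
Qed.

Lemma proximal_dist_le theta r K n :
  rate_of_divergence gamma theta -> 0 <= r -> rho ^+ 4 < K%:R * phi r ^+ 2 ->
  (theta K < n)%N -> `|xs n - p| <= r.
Proof.
move=> theta_div r_ge0 K_large lt_n; rewrite leNgt; apply/negP => lt_r.
have r_le : r <= `|xs (theta K).+1 - p|.
  exact: le_trans (ltW lt_r) (proximal_fejer lt_n).
have := proximal_sum_bound r_ge0 r_le.
apply/negP; rewrite -ltNge; apply: lt_le_trans K_large _.
by rewrite ler_wpM2r ?sqr_ge0; last exact: theta_div.
Qed.

End Ball.
End ProximalPoint.

Lemma uniformly_monotone_zer_unique (R : realType) (V : normedModType R)
    (ip : V -> V -> R) (A : V -> set V) (C : set V) (phi : R -> R) :
  inner_product ip -> uniformly_monotone_on ip A C phi ->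
  (forall t, 0 <= t -> 0 <= phi t) -> (forall t, 0 <= t -> phi t = 0 -> t = 0) ->
  forall p q, C p -> C q -> zer A p -> zer A q -> q = p.
Proof.
move=> ip_inner A_unif phi_ge0 phi_eq0 p q Cp Cq Ap Aq.
have := A_unif _ _ _ _ Cq Cp Aq Ap; rewrite subrr ip0r // => phi_le0.
have /phi_eq0 : phi `|q - p| = 0 by apply/eqP; rewrite eq_le phi_le0 phi_ge0.
by move=> /(_ (normr_ge0 _)) /normr0_eq0 /subr0_eq.
Qed.

Lemma cvg_rate_of_convergence (R : realType) (V : normedModType R)
    (a : nat -> V) (l : V) (Phi : nat -> nat) :
  rate_of_convergence a l Phi -> a @ \oo --> l.
Proof.
move=> a_rate; apply/cvgrPdist_le => eps eps_gt0.
have [k _ /(_ k (leqnn k)) k_lt] := near_infty_natSinv_lt (PosNum eps_gt0).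
near=> n; rewrite distrC; apply: le_trans (a_rate k n _) (ltW k_lt).
by near: n; exact: nbhs_infty_ge.
Unshelve. all: by end_near.
Qed.

Lemma Psi_index_large (R : realType) (b : nat) (eps : R) : 0 < eps -> (0 < b)%N ->
  b%:R ^+ 4 < (b ^ 2 * (`|Num.ceil (2 * b%:R / eps)|%N + 1) ^ 2)%:R * eps ^+ 2.
Proof.
move=> eps_gt0 b_gt0; set c := `|Num.ceil _|%N.
have c_ge : 2 * b%:R / eps <= c%:R.
  by rewrite natr_absz; apply: le_trans (ceil_ge _) _; rewrite ler_int ler_norm.
have b_lt : b%:R < (c%:R + 1) * eps.
  rewrite ler_pdivrMr // in c_ge; have : 0 < b%:R :> R by rewrite ltr0n.
  lra.
rewrite natrM !natrX natrD -mulrA -exprMn (_ : 4 = 2 + 2)%N // exprD.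
rewrite ltr_pM2l ?exprn_gt0 ?ltr0n // ltr_sqr ?nnegrE //.
by rewrite (le_trans _ (ltW b_lt)).
Qed.

Theorem proposition5p2 (R : realType) (H : completeNormedModType R)
  (ip : H -> H -> R) (Hip : inner_product ip)
  (Hnorm : forall x : H, `|x| = Num.sqrt (ip x x))
  (A : H -> set H) (Amax : maximally_monotone ip A)
  (Azer : zer A !=set0)
  (phi : R -> R)
  (phi_ge0 : forall t, 0 <= t -> 0 <= phi t)
  (phi_incr : forall s t, 0 <= s -> s <= t -> phi s <= phi t)
  (phi0 : forall t, 0 <= t -> (phi t = 0 <-> t = 0))
  (gamma : nat -> R) (gamma_gt0 : forall n, 0 < gamma n)
  (gamma_div : forall M : R, exists N : nat, M <= \sum_(0 <= n < N) gamma n ^+ 2)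
  (theta : nat -> nat) (Htheta : rate_of_divergence gamma theta)
  (b : nat) (p : H) (Hp : zer A p)
  (Aunif : uniformly_monotone_on ip A [set y | `|y - p| <= b%:R] phi)
  (x : H) (Hx : `|x - p| <= b%:R)
  (xs : nat -> H) (Hx0 : xs 0%N = x)
  (Hxs : forall n, resolvent A (gamma n) (xs n) (xs n.+1)) :
  (forall q, `|q - p| <= b%:R -> zer A q -> q = p) /\
  xs @ \oo --> p /\
  rate_of_convergence xs p (Psi b theta phi).
Proof.
have x0_in_ball : `|xs 0%N - p| <= b%:R by rewrite Hx0.
split.
  move=> q q_in_ball; apply: (uniformly_monotone_zer_unique Hip Aunif) => //.
    by move=> t t_ge0 /(phi0 t t_ge0).
  by rewrite /= subrr normr0.
suff xs_rate : rate_of_convergence xs p (Psi b theta phi).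
  by split=> //; exact: cvg_rate_of_convergence xs_rate.
move=> k n lt_n.
have r_gt0 : 0 < k.+1%:R^-1 :> R by rewrite invr_gt0 ltr0n.
have [b0|b_gt0] := posnP b.
  apply: le_trans (proximal_in_ball Hip Hnorm Amax.1 gamma_gt0 Hp Hxs x0_in_ball n) _.
  by rewrite b0 ltW.
have phi_gt0 : 0 < phi k.+1%:R^-1.
  rewrite lt_def phi_ge0 ?ltW // andbT; apply/eqP.
  by move/(phi0 _ (ltW r_gt0)) => r0; rewrite r0 ltxx in r_gt0.
apply: (proximal_dist_le Hip Hnorm Amax.1 gamma_gt0 Hp Hxs phi_ge0 phi_incr
  Aunif x0_in_ball Htheta (ltW r_gt0) _ lt_n).
exact: Psi_index_large.
Qed.
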